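(* Let $y\ge1$ be an integer and $\rho\in(0,1)$. For any probability distribution $G$ supported on $\mathbb{R}_+$, $\theta_G(y;\rho)\ge\rho^2/16$.
   Context: $f_G(y)=\int\frac{\theta^ye^{-\theta}}{y!}G(d\theta)$ for $y\in\{0,1,\dots\}$, $\Delta f_G(y)=f_G(y+1)-f_G(y)$, and $\theta_G(y;\rho)=(y+1)\big(\frac{\Delta f_G(y)}{f_G(y)\vee\rho}+1\big)$. *)

From HB Require Import structures.
From mathcomp Require Import all_boot all_order all_algebra.
From mathcomp Require Import all_classical all_reals all_analysis.
Set Implicit Arguments. Unset Strict Implicit. Unset Printing Implicit Defensive.
Import Order.TTheory GRing.Theory Num.Theory.
Local Open Scope classical_set_scope.
Local Open Scope ring_scope.

Definition pois_kernel {R : realType} (y : nat) (t : R) : R :=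
  t ^+ y * expR (- t) / (y`!)%:R.

Definition fG {R : realType} (G : probability R R) (y : nat) : R :=
  Rintegral G setT (pois_kernel y).

Definition DfG {R : realType} (G : probability R R) (y : nat) : R :=
  fG G y.+1 - fG G y.

Definition thetaG {R : realType} (G : probability R R) (y : nat) (rho : R) : R :=
  (y.+1)%:R * (DfG G y / Num.max (fG G y) rho + 1).

From HB Require Import structures.
From mathcomp Require Import all_boot all_order all_algebra.
From mathcomp Require Import all_classical all_reals all_analysis.
From mathcomp Require Import measurable_realfun ring lra.
Set Implicit Arguments. Unset Strict Implicit. Unset Printing Implicit Defensive.

(* With p_k the Poisson kernel, t p_{k+1}(t) = (k+2) p_{k+2}(t) and
   p_{k+1}(t) <= t for t >= 0, so e p_{k+1}(t) <= (k+2) p_{k+2}(t) + e^2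
   (split on t >= e).  Integrating against G, which lives on t >= 0, gives
   e f_G(k+1) <= (k+2) f_G(k+2) + e^2 for every e >= 0, and this forces
   theta_G(k+1; rho) >= e - e^2/rho whichever of f_G(k+1), rho is the larger.
   The choice e = rho/2 yields rho/4 >= rho^2/16. *)

Import Order.TTheory GRing.Theory Num.Theory.
Local Open Scope classical_set_scope.
Local Open Scope ring_scope.

Lemma ler_mul_addsqr (R : realDomainType) (e p t : R) :
  0 <= e -> 0 <= p <= t -> e * p <= t * p + e ^+ 2.
Proof.
move=> e0 /andP[p0 pt]; case: (leP e t) => [et | te]; nra.
Qed.

Section PoissonKernel.
Variable R : realType.
Implicit Types (k : nat) (t : R).

Lemma measurable_pois_kernel k : measurable_fun setT (@pois_kernel R k).
Proof.
apply: measurable_funM => //; apply: measurable_funM.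
  exact: measurable_funX.
exact: measurableT_comp.
Qed.

Lemma pois_kernel_ge0 k t : 0 <= t -> 0 <= pois_kernel k t.
Proof. by move=> t0; rewrite /pois_kernel !mulr_ge0 ?exprn_ge0 ?expR_ge0. Qed.

Lemma pois_kernel_le1 k t : 0 <= t -> pois_kernel k t <= 1.
Proof.
move=> t0; rewrite /pois_kernel expRN mulrAC ler_pdivrMr ?expR_gt0 // mul1r.
case: k => [|k]; first by rewrite expr0 divr1 -expR0 ler_expR.
by apply: le_trans (expR_ge1Dxn k t0); rewrite lerDr.
Qed.

Lemma pois_kernelS k t : k.+1%:R * pois_kernel k.+1 t = t * pois_kernel k t.
Proof.
rewrite /pois_kernel factS natrM exprS.
by field; rewrite addrC natr1 !pnatr_eq0 -lt0n fact_gt0.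
Qed.

Lemma pois_kernelS_le k t : 0 <= t -> pois_kernel k.+1 t <= t.
Proof.
move=> t0; apply: (@le_trans _ _ (k.+1%:R * pois_kernel k.+1 t)).
  by rewrite ler_peMl ?pois_kernel_ge0 // ler1n.
by rewrite pois_kernelS ler_piMr ?pois_kernel_le1.
Qed.

End PoissonKernel.

Lemma Rintegral_setC_null d (T : measurableType d) (R : realType)
    (mu : measure T R) (N : set T) (f : T -> R) :
  measurable N -> measurable_fun setT f -> mu N = 0%E ->
  \int[mu]_x f x = \int[mu]_(x in ~` N) f x.
Proof.
move=> mN mf muN0; rewrite /Rintegral -(setUv N) integral_setU //.
- by rewrite null_set_integral ?add0e //; exact/measurable_EFinP/measurable_funTS.
- exact: measurableC.
- by rewrite setUv; exact/measurable_EFinP.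
- exact/disj_setPCl.
Qed.

Lemma ler_sub_sqr_div_max (R : realFieldType) (a b n e rho : R) :
  0 < rho -> 0 <= a -> 0 <= e <= n -> e * a <= n * b + e ^+ 2 ->
  e - e ^+ 2 / rho <= n * ((b - a) / Num.max a rho + 1).
Proof.
move=> rho0 a0 /andP[e0 en] shift; have rho_neq0 := lt0r_neq0 rho0.
case: (leP a rho) => [arho | rhoa].
- have -> : e - e ^+ 2 / rho = (e * rho - e ^+ 2) / rho by field.
  have -> : n * ((b - a) / rho + 1) = (n * b + n * (rho - a)) / rho by field.
  rewrite ler_pM2r ?invr_gt0 //; nra.
- have a0' : 0 < a := lt_trans rho0 rhoa.
  apply: (@le_trans _ _ (e - e ^+ 2 / a)).
    by rewrite lerD2l lerN2 ler_wpM2l ?sqr_ge0 // lef_pV2 ?ltW.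
  have a_neq0 := lt0r_neq0 a0'.
  have -> : e - e ^+ 2 / a = (e * a - e ^+ 2) / a by field.
  have -> : n * ((b - a) / a + 1) = n * b / a by field.
  rewrite ler_pM2r ?invr_gt0 //; lra.
Qed.

Section SupportedOnNonnegatives.
Variables (R : realType) (G : probability R R).
Hypothesis G_neg0 : G [set t : R | t < 0] = 0%E.

Let N := [set t : R | t < 0].

Let measurableN : measurable N.
Proof.
have -> : N = `]-oo, 0[%classic by apply/seteqP; split => t /=; rewrite in_itv.
exact: measurable_itv.
Qed.

Let notN_ge0 t : (~` N) t -> 0 <= t.
Proof. by move=> /negP; rewrite -leNgt. Qed.

Let measurable_notN : measurable (~` N).
Proof. exact: measurableC. Qed.

Let G_setC : G (~` N) = 1%E.
Proof. by rewrite probability_setC // G_neg0 sube0. Qed.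

(* On N the kernel is unbounded, hence integrals are taken over its complement. *)
Let fG_setC k : fG G k = \int[G]_(t in ~` N) pois_kernel k t.
Proof. by apply: Rintegral_setC_null => //; exact: measurable_pois_kernel. Qed.

Lemma fG_ge0 k : 0 <= fG G k.
Proof. by rewrite fG_setC; apply: Rintegral_ge0 => t /notN_ge0/pois_kernel_ge0. Qed.

Let integrable_pois_kernel k : G.-integrable (~` N) (EFin \o pois_kernel k).
Proof.
apply: measurable_bounded_integrable => //.
- by apply: le_lt_trans (probability_le1 G measurable_notN) (ltry _).
- apply: measurable_funTS; exact: measurable_pois_kernel.
have norm_le1 t : (~` N) t -> `|pois_kernel k t| <= 1.
  by move=> /notN_ge0 t0; rewrite ger0_norm ?pois_kernel_le1 ?pois_kernel_ge0.
rewrite /bounded_near; near=> M => t /norm_le1 /le_trans; apply.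
by near: M; apply: nbhs_pinfty_ge.
Unshelve. all: by end_near. Qed.

Lemma fG_shift k e : 0 <= e ->
  e * fG G k.+1 <= k.+2%:R * fG G k.+2 + e ^+ 2.
Proof.
move=> e0; rewrite !fG_setC.
have -> : e ^+ 2 = \int[G]_(t in ~` N) e ^+ 2.
  by rewrite Rintegral_cst // [X in fine X]G_setC mulr1.
have integrableZ c j : G.-integrable (~` N) (EFin \o (fun t => c * pois_kernel j t)).
  exact: eq_integrable (integrableZl measurable_notN c (integrable_pois_kernel j)).
have integrable_cst c : G.-integrable (~` N) (EFin \o cst c).
  exact: finite_measure_integrable_cst.
rewrite -!RintegralZl // -RintegralD //; last exact: integrable_cst.
apply: le_Rintegral => //.
  exact: eq_integrable (integrableD measurable_notN (integrableZ _ _) (integrable_cst _)).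
move=> t /notN_ge0 t0; rewrite pois_kernelS.
by rewrite ler_mul_addsqr ?pois_kernel_ge0 ?pois_kernelS_le.
Qed.

End SupportedOnNonnegatives.

Theorem lemma4 (R : realType) (y : nat) (rho : R) (G : probability R R) :
  (1 <= y)%N -> 0 < rho < 1 ->
  G [set t : R | t < 0] = 0%E ->
  rho ^+ 2 / 16 <= thetaG G y rho.
Proof.
case: y => [//|k] _ /andP[rho0 rho1] G_neg0.
have n_ge1 : 1 <= k.+2%:R :> R by rewrite ler1n.
have e_ge0 : 0 <= rho / 2 by lra.
have e_le_n : 0 <= rho / 2 <= k.+2%:R by apply/andP; split; lra.
have := ler_sub_sqr_div_max rho0 (fG_ge0 G_neg0 k.+1) e_le_n (fG_shift G_neg0 k e_ge0).
rewrite /thetaG /DfG; apply: le_trans.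
have -> : rho / 2 - (rho / 2) ^+ 2 / rho = rho / 4 by field; exact: lt0r_neq0.
nra.
Qed.
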